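(* Let $\mathbf{V}$ be a variety of Heyting algebras. If $L\in\mathbf{V}$ is projective in $\mathbf{V}$, then $\mathcal{B}(L)$ is projective in $\rho(\mathbf{V})$.
   Context: Interior algebra: Boolean algebra with operator $g$ satisfying $g(1)=1$, $g(xy)=g(x)g(y)$, $g(x)\le x$, $gg(x)=g(x)$; for an interior algebra $A$, $\mathcal{O}(A)=A^\circ$ is the Heyting algebra of its open elements with $a\Rightarrow b=g(-a+b)$. $\rho(\mathbf{V})$ is the variety of all interior algebras $A$ with $\mathcal{O}(A)\in\mathbf{V}$. For a Heyting algebra $L$, $\mathcal{B}(L)=\langle\mathrm{Fr}(L),g_L\rangle$ with $\mathrm{Fr}(L)$ the free Boolean extension of $L$ and $g_L((-u_1+v_1)\cdots(-u_n+v_n))=(u_1\Rightarrow v_1)\cdots(u_n\Rightarrow v_n)$. *)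

From Stdlib Require Import List.
Set Implicit Arguments.

Record HSig := {
  hcar : Type;
  hmeet : hcar -> hcar -> hcar;
  hjoin : hcar -> hcar -> hcar;
  himp  : hcar -> hcar -> hcar;
  hbot  : hcar;
  htop  : hcar }.

Definition is_heyting (L : HSig) : Prop :=
  (forall x y z, hmeet L x (hmeet L y z) = hmeet L (hmeet L x y) z) /\
  (forall x y z, hjoin L x (hjoin L y z) = hjoin L (hjoin L x y) z) /\
  (forall x y, hmeet L x y = hmeet L y x) /\
  (forall x y, hjoin L x y = hjoin L y x) /\
  (forall x y, hmeet L x (hjoin L x y) = x) /\
  (forall x y, hjoin L x (hmeet L x y) = x) /\
  (forall x, hmeet L x (htop L) = x) /\
  (forall x, hjoin L x (hbot L) = x) /\
  (forall x, himp L x x = htop L) /\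
  (forall x y, hmeet L x (himp L x y) = hmeet L x y) /\
  (forall x y, hmeet L y (himp L x y) = y) /\
  (forall x y z, himp L x (hmeet L y z) = hmeet L (himp L x y) (himp L x z)).

Inductive hterm : Type :=
  | TVar : nat -> hterm
  | TBot : hterm
  | TTop : hterm
  | TMeet : hterm -> hterm -> hterm
  | TJoin : hterm -> hterm -> hterm
  | TImp : hterm -> hterm -> hterm.

Fixpoint heval (L : HSig) (v : nat -> hcar L) (t : hterm) : hcar L :=
  match t with
  | TVar n => v n
  | TBot => hbot L
  | TTop => htop L
  | TMeet a b => hmeet L (heval L v a) (heval L v b)
  | TJoin a b => hjoin L (heval L v a) (heval L v b)
  | TImp a b => himp L (heval L v a) (heval L v b)
  end.

(* A variety of Heyting algebras is (Birkhoff) the class of Heyting algebras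
   satisfying a set E of equations; we represent V by E. *)
Definition in_V (E : hterm -> hterm -> Prop) (L : HSig) : Prop :=
  is_heyting L /\
  forall s t, E s t -> forall v : nat -> hcar L, heval L v s = heval L v t.

Definition hhom (L M : HSig) (f : hcar L -> hcar M) : Prop :=
  (forall x y, f (hmeet L x y) = hmeet M (f x) (f y)) /\
  (forall x y, f (hjoin L x y) = hjoin M (f x) (f y)) /\
  (forall x y, f (himp L x y) = himp M (f x) (f y)) /\
  f (hbot L) = hbot M /\ f (htop L) = htop M.

Definition projective_in_V (E : hterm -> hterm -> Prop) (L : HSig) : Prop :=
  in_V E L /\
  forall (A B : HSig), in_V E A -> in_V E B ->
  forall f : hcar A -> hcar B, hhom A B f -> (forall y, exists x, f x = y) ->
  forall h : hcar L -> hcar B, hhom L B h ->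
  exists k : hcar L -> hcar A, hhom L A k /\ forall x, f (k x) = h x.

Record BSig := {
  bcar : Type;
  bmeet : bcar -> bcar -> bcar;
  bjoin : bcar -> bcar -> bcar;
  bcompl : bcar -> bcar;
  bbot : bcar;
  btop : bcar }.

Definition is_boolean (B : BSig) : Prop :=
  (forall x y z, bmeet B x (bmeet B y z) = bmeet B (bmeet B x y) z) /\
  (forall x y z, bjoin B x (bjoin B y z) = bjoin B (bjoin B x y) z) /\
  (forall x y, bmeet B x y = bmeet B y x) /\
  (forall x y, bjoin B x y = bjoin B y x) /\
  (forall x y, bmeet B x (bjoin B x y) = x) /\
  (forall x y, bjoin B x (bmeet B x y) = x) /\
  (forall x y z, bmeet B x (bjoin B y z) = bjoin B (bmeet B x y) (bmeet B x z)) /\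
  (forall x y z, bjoin B x (bmeet B y z) = bmeet B (bjoin B x y) (bjoin B x z)) /\
  (forall x, bmeet B x (btop B) = x) /\
  (forall x, bjoin B x (bbot B) = x) /\
  (forall x, bmeet B x (bbot B) = bbot B) /\
  (forall x, bjoin B x (btop B) = btop B) /\
  (forall x, bmeet B x (bcompl B x) = bbot B) /\
  (forall x, bjoin B x (bcompl B x) = btop B).

Definition bhom (A B : BSig) (f : bcar A -> bcar B) : Prop :=
  (forall x y, f (bmeet A x y) = bmeet B (f x) (f y)) /\
  (forall x y, f (bjoin A x y) = bjoin B (f x) (f y)) /\
  (forall x, f (bcompl A x) = bcompl B (f x)) /\
  f (bbot A) = bbot B /\ f (btop A) = btop B.

Definition lathom (L : HSig) (B : BSig) (f : hcar L -> bcar B) : Prop :=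
  (forall x y, f (hmeet L x y) = bmeet B (f x) (f y)) /\
  (forall x y, f (hjoin L x y) = bjoin B (f x) (f y)) /\
  f (hbot L) = bbot B /\ f (htop L) = btop B.

Definition is_free_bool_ext (L : HSig) (B : BSig) (e : hcar L -> bcar B) : Prop :=
  is_boolean B /\ lathom L B e /\
  forall (C : BSig), is_boolean C ->
  forall f : hcar L -> bcar C, lathom L C f ->
  exists fb : bcar B -> bcar C,
    (bhom B C fb /\ forall x, fb (e x) = f x) /\
    forall fb' : bcar B -> bcar C, bhom B C fb' -> (forall x, fb' (e x) = f x) ->
      forall y, fb' y = fb y.

Definition bprod (B : BSig) (l : list (bcar B)) : bcar B :=
  fold_right (bmeet B) (btop B) l.
Definition hprod (L : HSig) (l : list (hcar L)) : hcar L :=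
  fold_right (hmeet L) (htop L) l.

Record IASig := { iba : BSig; ig : bcar iba -> bcar iba }.

Definition is_interior (A : IASig) : Prop :=
  is_boolean (iba A) /\
  ig A (btop (iba A)) = btop (iba A) /\
  (forall x y, ig A (bmeet (iba A) x y) = bmeet (iba A) (ig A x) (ig A y)) /\
  (forall x, bmeet (iba A) (ig A x) x = ig A x) /\
  (forall x, ig A (ig A x) = ig A x).

Definition iahom (A B : IASig) (f : bcar (iba A) -> bcar (iba B)) : Prop :=
  bhom (iba A) (iba B) f /\ forall x, f (ig A x) = ig B (f x).

Section Opens.
Variable A : IASig.
Hypothesis HA : is_interior A.
Local Notation B := (iba A).
Local Notation g := (ig A).
Definition opn := { x : bcar B | g x = x }.

Lemma open_meet (x y : opn) : g (bmeet B (proj1_sig x) (proj1_sig y)) =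
  bmeet B (proj1_sig x) (proj1_sig y).
Proof.
  destruct x as [x hx], y as [y hy]; simpl.
  destruct HA as [_ [_ [Hm _]]]. rewrite Hm, hx, hy. reflexivity.
Qed.

Lemma open_join (x y : opn) : g (bjoin B (proj1_sig x) (proj1_sig y)) =
  bjoin B (proj1_sig x) (proj1_sig y).
Proof.
  destruct x as [x hx], y as [y hy]; simpl.
  destruct HA as [HB [_ [Hm [Hle _]]]].
  destruct HB as [_ [_ [Cm [Cj [Ab1 [_ [D _]]]]]]].
  set (G := g (bjoin B x y)).
  assert (Ex : x = bmeet B x G).
  { unfold G. rewrite <- hx at 1. rewrite <- (Ab1 x y) at 1. rewrite Hm, hx. reflexivity. }
  assert (Ey : y = bmeet B y G).
  { unfold G. rewrite <- hy at 1. rewrite <- (Ab1 y x) at 1. rewrite Hm, hy, Cj. reflexivity. }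
  change (G = bjoin B x y).
  transitivity (bmeet B G (bjoin B x y)). { symmetry; apply Hle. }
  rewrite D, (Cm G x), (Cm G y). rewrite <- Ex. rewrite <- Ey. reflexivity.
Qed.

Lemma open_bot : g (bbot B) = bbot B.
Proof.
  destruct HA as [HB [_ [_ [Hle _]]]].
  destruct HB as [_ [_ [_ [_ [_ [_ [_ [_ [_ [_ [M0 _]]]]]]]]]]].
  rewrite <- (Hle (bbot B)). apply M0.
Qed.

Lemma open_top : g (btop B) = btop B.
Proof. destruct HA as [_ [H _]]. exact H. Qed.

Lemma open_g (x : bcar B) : g (g x) = g x.
Proof. destruct HA as [_ [_ [_ [_ H]]]]. apply H. Qed.

Definition Oalg : HSig := {|
  hcar := opn;
  hmeet := fun x y => exist _ _ (open_meet x y);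
  hjoin := fun x y => exist _ _ (open_join x y);
  himp := fun x y => exist (fun z => g z = z)
            (g (bjoin B (bcompl B (proj1_sig x)) (proj1_sig y))) (open_g _);
  hbot := exist _ _ open_bot;
  htop := exist _ _ open_top |}.
End Opens.

Definition in_rho (E : hterm -> hterm -> Prop) (A : IASig) : Prop :=
  exists HA : is_interior A, in_V E (Oalg HA).

Definition projective_in_rho (E : hterm -> hterm -> Prop) (P : IASig) : Prop :=
  in_rho E P /\
  forall (A B : IASig), in_rho E A -> in_rho E B ->
  forall f : bcar (iba A) -> bcar (iba B), iahom A B f ->
    (forall y, exists x, f x = y) ->
  forall h : bcar (iba P) -> bcar (iba B), iahom P B h ->
  exists k : bcar (iba P) -> bcar (iba A), iahom P A k /\ forall x, f (k x) = h x.

(* Every element of the free Boolean extension Fr(L) is a finite meet of clauses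
   -e(u) + e(v) (the elements of this form contain e(L) and are closed under the Boolean
   operations).  Hence g_L is an interior operator whose open elements are exactly e(L),
   so O(B(L)) is a homomorphic image of L and lies in V.  For projectivity, an onto
   morphism f : A -> C in rho(V) restricts to an onto Heyting morphism O(A) -> O(C), and
   h : B(L) -> C restricts to L -> O(C).  Projectivity of L lifts the latter to
   k : L -> O(A); the Boolean extension of k to Fr(L) commutes with the interior operators
   because it does so on clauses, and it composes with f to h because both agree on e(L). *)

From Stdlib Require Import List ProofIrrelevance FunctionalExtensionality ClassicalEpsilon.
Import ListNotations.
Set Implicit Arguments.

Lemma sig_eq (T : Type) (P : T -> Prop) (x y : {z | P z}) :
  proj1_sig x = proj1_sig y -> x = y.
Proof. apply eq_sig_hprop; intros; apply proof_irrelevance. Qed.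

Section BooleanAlgebra.
Variable B : BSig.
Hypothesis HB : is_boolean B.
Local Infix "⊓" := (bmeet B) (at level 40, left associativity).
Local Infix "⊔" := (bjoin B) (at level 50, left associativity).
Local Notation "¬ x" := (bcompl B x) (at level 35, right associativity).
Local Notation "⊥" := (bbot B).
Local Notation "⊤" := (btop B).

Local Ltac boolean_axioms :=
  destruct HB as (?&?&?&?&?&?&?&?&?&?&?&?&?&?); auto.

Lemma bmeetA x y z : x ⊓ (y ⊓ z) = x ⊓ y ⊓ z. Proof. boolean_axioms. Qed.
Lemma bjoinA x y z : x ⊔ (y ⊔ z) = x ⊔ y ⊔ z. Proof. boolean_axioms. Qed.
Lemma bmeetC x y : x ⊓ y = y ⊓ x. Proof. boolean_axioms. Qed.
Lemma bjoinC x y : x ⊔ y = y ⊔ x. Proof. boolean_axioms. Qed.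
Lemma bmeetKU x y : x ⊓ (x ⊔ y) = x. Proof. boolean_axioms. Qed.
Lemma bjoinKI x y : x ⊔ x ⊓ y = x. Proof. boolean_axioms. Qed.
Lemma bmeetUr x y z : x ⊓ (y ⊔ z) = x ⊓ y ⊔ x ⊓ z. Proof. boolean_axioms. Qed.
Lemma bjoinIr x y z : x ⊔ y ⊓ z = (x ⊔ y) ⊓ (x ⊔ z). Proof. boolean_axioms. Qed.
Lemma bmeet1 x : x ⊓ ⊤ = x. Proof. boolean_axioms. Qed.
Lemma bjoin0 x : x ⊔ ⊥ = x. Proof. boolean_axioms. Qed.
Lemma bmeet0 x : x ⊓ ⊥ = ⊥. Proof. boolean_axioms. Qed.
Lemma bjoin1 x : x ⊔ ⊤ = ⊤. Proof. boolean_axioms. Qed.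
Lemma bmeetN x : x ⊓ ¬ x = ⊥. Proof. boolean_axioms. Qed.
Lemma bjoinN x : x ⊔ ¬ x = ⊤. Proof. boolean_axioms. Qed.

Lemma bmeetxx x : x ⊓ x = x.
Proof. rewrite <- (bjoinKI x x) at 2. apply bmeetKU. Qed.

Definition ble x y := x ⊓ y = x.

Lemma ble_trans x y z : ble x y -> ble y z -> ble x z.
Proof. unfold ble; intros Hxy Hyz. rewrite <- Hxy at 1. rewrite <- bmeetA, Hyz. exact Hxy. Qed.

Lemma bleIr x y : ble (x ⊓ y) y.
Proof. unfold ble. rewrite <- bmeetA, bmeetxx. reflexivity. Qed.

Lemma bleUl x y : ble x (x ⊔ y).
Proof. apply bmeetKU. Qed.

Lemma bleUr x y : ble y (x ⊔ y).
Proof. unfold ble. rewrite bjoinC. apply bmeetKU. Qed.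

Lemma bleU x y z : ble x z -> ble y z -> ble (x ⊔ y) z.
Proof.
  unfold ble; intros Hxz Hyz.
  rewrite bmeetC, bmeetUr, (bmeetC z x), (bmeetC z y), Hxz, Hyz. reflexivity.
Qed.

Lemma bleI2 x y x' y' : ble x y -> ble x' y' -> ble (x ⊓ x') (y ⊓ y').
Proof.
  unfold ble; intros Hxy Hxy'.
  rewrite bmeetA, <- (bmeetA x x' y), (bmeetC x' y), bmeetA, Hxy, <- bmeetA, Hxy'.
  reflexivity.
Qed.

Lemma ble_shunt x y z : ble (x ⊓ y) z -> ble x (¬ y ⊔ z).
Proof.
  intros Hxyz.
  assert (Hx : x = x ⊓ y ⊔ x ⊓ ¬ y) by (rewrite <- bmeetUr, bjoinN, bmeet1; reflexivity).
  rewrite Hx. apply bleU.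
  - eapply ble_trans; [exact Hxyz | apply bleUr].
  - eapply ble_trans; [apply bleIr | apply bleUl].
Qed.

Lemma bcompl_unique x y : x ⊓ y = ⊥ -> x ⊔ y = ⊤ -> y = ¬ x.
Proof.
  intros Hmeet Hjoin.
  assert (Hy : y = y ⊓ ¬ x).
  { rewrite <- (bmeet1 y) at 1. rewrite <- (bjoinN x), bmeetUr, (bmeetC y x), Hmeet, bjoinC, bjoin0.
    reflexivity. }
  assert (Hnx : ¬ x = ¬ x ⊓ y).
  { rewrite <- (bmeet1 (¬ x)) at 1. rewrite <- Hjoin, bmeetUr, (bmeetC (¬ x) x), bmeetN, bjoinC, bjoin0.
    reflexivity. }
  rewrite Hy at 1. rewrite Hnx at 2. apply bmeetC.
Qed.

Lemma bcomplK x : ¬ ¬ x = x.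
Proof. symmetry. apply bcompl_unique; [rewrite bmeetC; apply bmeetN | rewrite bjoinC; apply bjoinN]. Qed.

Lemma bcompl1 : ¬ ⊤ = ⊥.
Proof. symmetry. apply bcompl_unique; [apply bmeet0 | apply bjoin0]. Qed.

Lemma bcomplI x y : ¬ (x ⊓ y) = ¬ x ⊔ ¬ y.
Proof.
  symmetry. apply bcompl_unique.
  - rewrite bmeetUr, <- (bmeetA x y (¬ y)), bmeetN, bmeet0, bjoin0,
      (bmeetC x y), <- bmeetA, bmeetN, bmeet0.
    reflexivity.
  - rewrite bjoinC, bjoinIr, <- (bjoinA (¬ x) (¬ y) y), (bjoinC (¬ y) y), bjoinN, bjoin1,
      (bjoinC (¬ x) (¬ y)), <- bjoinA, (bjoinC (¬ x) x), bjoinN, bjoin1, bmeet1.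
    reflexivity.
Qed.

Lemma bcomplU x y : ¬ (x ⊔ y) = ¬ x ⊓ ¬ y.
Proof. rewrite <- (bcomplK (¬ x ⊓ ¬ y)), bcomplI, !bcomplK. reflexivity. Qed.

Lemma bprod_cat l1 l2 : bprod B (l1 ++ l2) = bprod B l1 ⊓ bprod B l2.
Proof.
  induction l1 as [|x l1 IH]; simpl.
  - rewrite bmeetC, bmeet1. reflexivity.
  - unfold bprod in *. rewrite IH, bmeetA. reflexivity.
Qed.
End BooleanAlgebra.

Section HeytingAlgebra.
Variable L : HSig.
Hypothesis HL : is_heyting L.
Local Infix "∧" := (hmeet L) (at level 40, left associativity).
Local Infix "⇒" := (himp L) (at level 55, right associativity).

Local Ltac heyting_axioms := destruct HL as (?&?&?&?&?&?&?&?&?&?&?&?); auto.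

Lemma hmeetA x y z : x ∧ (y ∧ z) = x ∧ y ∧ z. Proof. heyting_axioms. Qed.
Lemma hmeetC x y : x ∧ y = y ∧ x. Proof. heyting_axioms. Qed.
Lemma hmeet1 x : x ∧ htop L = x. Proof. heyting_axioms. Qed.
Lemma hmeet_imp x y : x ∧ (x ⇒ y) = x ∧ y. Proof. heyting_axioms. Qed.

Lemma himp1x y : htop L ⇒ y = y.
Proof. rewrite <- (hmeet1 (htop L ⇒ y)), hmeetC, hmeet_imp, hmeetC, hmeet1. reflexivity. Qed.

Lemma hprod_cat l1 l2 : hprod L (l1 ++ l2) = hprod L l1 ∧ hprod L l2.
Proof.
  induction l1 as [|x l1 IH]; simpl.
  - rewrite hmeetC, hmeet1. reflexivity.
  - unfold hprod in *. rewrite IH, hmeetA. reflexivity.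
Qed.
End HeytingAlgebra.

Lemma lathom_hprod L B f : lathom L B f -> forall l, f (hprod L l) = bprod B (map f l).
Proof.
  intros (Hm & _ & _ & Ht) l. induction l as [|x l IH]; simpl.
  - exact Ht.
  - unfold hprod, bprod in *. rewrite Hm, IH. reflexivity.
Qed.

Lemma bhom_comp A B C f h : bhom A B f -> bhom B C h -> bhom A C (fun x => h (f x)).
Proof.
  intros (Hm & Hj & Hc & Hb & Ht) (Km & Kj & Kc & Kb & Kt).
  repeat split; intros; rewrite ?Hm, ?Hj, ?Hc, ?Hb, ?Ht, ?Km, ?Kj, ?Kc, ?Kb, ?Kt; reflexivity.
Qed.

Lemma bhom_lathom_comp L B C e f :
  lathom L B e -> bhom B C f -> lathom L C (fun a => f (e a)).
Proof.
  intros (Hm & Hj & Hb & Ht) (Km & Kj & _ & Kb & Kt).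
  repeat split; intros; rewrite ?Hm, ?Hj, ?Hb, ?Ht, ?Km, ?Kj, ?Kb, ?Kt; reflexivity.
Qed.

Lemma hhom_comp L M N f h : hhom L M f -> hhom M N h -> hhom L N (fun x => h (f x)).
Proof.
  intros (Hm & Hj & Hi & Hb & Ht) (Km & Kj & Ki & Kb & Kt).
  repeat split; intros; rewrite ?Hm, ?Hj, ?Hi, ?Hb, ?Ht, ?Km, ?Kj, ?Ki, ?Kb, ?Kt; reflexivity.
Qed.

Lemma hhom_heval L M f : hhom L M f ->
  forall v t, f (heval L v t) = heval M (fun n => f (v n)) t.
Proof.
  intros (Hm & Hj & Hi & Hb & Ht) v t.
  induction t; simpl; rewrite ?Hm, ?Hj, ?Hi, ?Hb, ?Ht, ?IHt1, ?IHt2; reflexivity.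
Qed.

Lemma is_heyting_image L M f : hhom L M f -> (forall y, exists x, f x = y) ->
  is_heyting L -> is_heyting M.
Proof.
  intros (Hm & Hj & Hi & Hb & Ht) Hsurj HL.
  destruct HL as (?&?&?&?&?&?&?&?&?&?&?&?).
  repeat split; intros;
    repeat match goal with y : hcar M |- _ => destruct (Hsurj y) as [? <-] end;
    rewrite <- ?Ht, <- ?Hb;
    repeat (rewrite <- Hm || rewrite <- Hj || rewrite <- Hi);
    f_equal; auto.
Qed.

Lemma in_V_image E L M f : hhom L M f -> (forall y, exists x, f x = y) ->
  in_V E L -> in_V E M.
Proof.
  intros Hf Hsurj [HL HE]. split; [exact (is_heyting_image Hf Hsurj HL)|].
  intros s t Hst w.
  destruct (choice _ Hsurj) as [sec Hsec].
  replace w with (fun n => f (sec (w n))) by (apply functional_extensionality; auto).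
  rewrite <- !(hhom_heval Hf). f_equal. apply HE, Hst.
Qed.

Section OpenElements.
Variables A C : IASig.
Hypotheses (HA : is_interior A) (HC : is_interior C).
Variable f : bcar (iba A) -> bcar (iba C).

Definition open_map (Hf : forall x, f (ig A x) = ig C (f x)) (x : opn A) : opn C :=
  exist _ (f (proj1_sig x)) (eq_trans (eq_sym (Hf _)) (f_equal f (proj2_sig x))).

Hypothesis Hf : iahom A C f.

Lemma open_map_hhom : hhom (Oalg HA) (Oalg HC) (open_map (proj2 Hf)).
Proof.
  destruct Hf as [(Hm & Hj & Hc & Hb & Ht) Hg].
  repeat split; intros; apply sig_eq; simpl; rewrite ?Hg, ?Hm, ?Hj, ?Hc, ?Hb, ?Ht;
    reflexivity.
Qed.

Lemma open_map_surjective : (forall y, exists x, f x = y) ->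
  forall y : opn C, exists x, open_map (proj2 Hf) x = y.
Proof.
  intros Hsurj [y Hy]. destruct (Hsurj y) as [x <-].
  exists (exist (fun z => ig A z = z) (ig A x) (open_g HA x)). apply sig_eq; simpl.
  rewrite (proj2 Hf). exact Hy.
Qed.
End OpenElements.

Lemma lathom_opens L A (HA : is_interior A) (k : hcar L -> opn A) :
  hhom L (Oalg HA) k -> lathom L (iba A) (fun a => proj1_sig (k a)).
Proof.
  intros (Hm & Hj & _ & Hb & Ht).
  repeat split; intros; rewrite ?Hm, ?Hj, ?Hb, ?Ht; reflexivity.
Qed.

Section FreeBooleanExtension.
Variables (L : HSig) (B : BSig) (e : hcar L -> bcar B).
Hypothesis hfree : is_free_bool_ext L B e.
Local Infix "⊓" := (bmeet B) (at level 40, left associativity).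
Local Infix "⊔" := (bjoin B) (at level 50, left associativity).
Local Notation "¬ x" := (bcompl B x) (at level 35, right associativity).

Let HB : is_boolean B := proj1 hfree.
Let He : lathom L B e := proj1 (proj2 hfree).

Lemma free_bool_ext_unique C (HC : is_boolean C) (f1 f2 : bcar B -> bcar C) :
  bhom B C f1 -> bhom B C f2 -> (forall a, f1 (e a) = f2 (e a)) -> forall x, f1 x = f2 x.
Proof.
  intros Hf1 Hf2 Hagree x.
  destruct (proj2 (proj2 hfree) C HC _ (bhom_lathom_comp He Hf1)) as [fb [_ Huniq]].
  rewrite (Huniq f1 Hf1 (fun _ => eq_refl)), (Huniq f2 Hf2 (fun a => eq_sym (Hagree a))).
  reflexivity.
Qed.

Section Generation.
Variable S : bcar B -> Prop.
Hypothesis S_e : forall a, S (e a).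
Hypothesis S_meet : forall x y, S x -> S y -> S (x ⊓ y).
Hypothesis S_join : forall x y, S x -> S y -> S (x ⊔ y).
Hypothesis S_compl : forall x, S x -> S (¬ x).

Let S_bot : S (bbot B).
Proof. destruct He as (_ & _ & <- & _). apply S_e. Qed.

Let S_top : S (btop B).
Proof. destruct He as (_ & _ & _ & <-). apply S_e. Qed.

Let subalgebra : BSig := {|
  bcar := {x | S x};
  bmeet := fun x y => exist _ _ (S_meet (proj2_sig x) (proj2_sig y));
  bjoin := fun x y => exist _ _ (S_join (proj2_sig x) (proj2_sig y));
  bcompl := fun x => exist _ _ (S_compl (proj2_sig x));
  bbot := exist _ _ S_bot;
  btop := exist _ _ S_top |}.

Let subalgebra_boolean : is_boolean subalgebra.
Proof.
  destruct HB as (?&?&?&?&?&?&?&?&?&?&?&?&?&?).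
  repeat split; intros; apply sig_eq; simpl; auto.
Qed.

(* The inclusion e : L -> S extends to fb : B -> S; then proj1_sig o fb and the identity
   agree on e(L), hence everywhere. *)
Lemma free_bool_ext_ind x : S x.
Proof.
  assert (Hincl : lathom L subalgebra (fun a => exist _ (e a) (S_e a))).
  { destruct He as (Hm & Hj & Hb & Ht).
    repeat split; intros; apply sig_eq; simpl; rewrite ?Hm, ?Hj, ?Hb, ?Ht; reflexivity. }
  destruct (proj2 (proj2 hfree) _ subalgebra_boolean _ Hincl) as [fb [[Hfb Hfbe] _]].
  assert (Hval : bhom B B (fun y => proj1_sig (fb y))).
  { destruct Hfb as (Hm & Hj & Hc & Hb & Ht).
    repeat split; intros; rewrite ?Hm, ?Hj, ?Hc, ?Hb, ?Ht; reflexivity. }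
  assert (Hid : bhom B B (fun y => y)) by (repeat split).
  assert (Hagree : forall a, e a = proj1_sig (fb (e a))) by (intro a; rewrite Hfbe; reflexivity).
  rewrite (free_bool_ext_unique HB Hid Hval Hagree x). apply proj2_sig.
Qed.
End Generation.

Let e_meet x y : e (hmeet L x y) = e x ⊓ e y := proj1 He x y.
Let e_join x y : e (hjoin L x y) = e x ⊔ e y := proj1 (proj2 He) x y.
Let e_bot : e (hbot L) = bbot B := proj1 (proj2 (proj2 He)).
Let e_top : e (htop L) = btop B := proj2 (proj2 (proj2 He)).

Definition clause (p : hcar L * hcar L) : bcar B := ¬ e (fst p) ⊔ e (snd p).
Definition clauses (ps : list (hcar L * hcar L)) : bcar B := bprod B (map clause ps).
Definition clausal (x : bcar B) : Prop := exists ps, x = clauses ps.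

Lemma clauses_cons p ps : clauses (p :: ps) = clause p ⊓ clauses ps.
Proof. reflexivity. Qed.

Lemma clauses1 p : clauses [p] = clause p.
Proof. apply (bmeet1 HB). Qed.

Lemma clauses_cat ps qs : clauses (ps ++ qs) = clauses ps ⊓ clauses qs.
Proof. unfold clauses. rewrite map_app. apply (bprod_cat HB). Qed.

Lemma e_clause a : e a = clause (htop L, a).
Proof. unfold clause; simpl. rewrite e_top, (bcompl1 HB), (bjoinC HB), (bjoin0 HB). reflexivity. Qed.

Lemma clause_join p q :
  clause p ⊔ clause q = clause (hmeet L (fst p) (fst q), hjoin L (snd p) (snd q)).
Proof.
  unfold clause; simpl. rewrite e_meet, e_join, (bcomplI HB), <- !(bjoinA HB). f_equal.
  rewrite !(bjoinA HB), (bjoinC HB (e (snd p))). reflexivity.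
Qed.

Lemma clause_join_clauses p qs :
  clause p ⊔ clauses qs
  = clauses (map (fun q => (hmeet L (fst p) (fst q), hjoin L (snd p) (snd q))) qs).
Proof.
  induction qs as [|q qs IH]; simpl.
  - apply (bjoin1 HB).
  - rewrite !clauses_cons, (bjoinIr HB), clause_join, IH. reflexivity.
Qed.

Lemma bcompl_clause p : ¬ clause p = e (fst p) ⊓ clause (snd p, hbot L).
Proof. unfold clause; simpl. rewrite (bcomplU HB), (bcomplK HB), e_bot, (bjoin0 HB). reflexivity. Qed.

Lemma clausal_e a : clausal (e a).
Proof. exists [(htop L, a)]. rewrite clauses1. apply e_clause. Qed.

Lemma clausal_meet x y : clausal x -> clausal y -> clausal (x ⊓ y).
Proof. intros [ps ->] [qs ->]. exists (ps ++ qs). symmetry. apply clauses_cat. Qed.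

Lemma clausal_join x y : clausal x -> clausal y -> clausal (x ⊔ y).
Proof.
  intros [ps ->] [qs ->]. induction ps as [|p ps IH].
  - exists []. change (clauses []) with (btop B). rewrite (bjoinC HB), (bjoin1 HB). reflexivity.
  - rewrite clauses_cons, (bjoinC HB), (bjoinIr HB), (bjoinC HB _ (clause p)),
      (bjoinC HB _ (clauses ps)).
    apply clausal_meet; [|exact IH].
    rewrite clause_join_clauses. eexists; reflexivity.
Qed.

Lemma clausal_compl x : clausal x -> clausal (¬ x).
Proof.
  intros [ps ->]. induction ps as [|p ps IH].
  - change (clauses []) with (btop B). rewrite (bcompl1 HB), <- e_bot. apply clausal_e.
  - rewrite clauses_cons, (bcomplI HB). apply clausal_join; [|exact IH].
    rewrite bcompl_clause. apply clausal_meet; [apply clausal_e|].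
    exists [(snd p, hbot L)]. symmetry. apply clauses1.
Qed.

Lemma clauses_normal_form x : clausal x.
Proof. exact (free_bool_ext_ind clausal clausal_e clausal_meet clausal_join clausal_compl x). Qed.

Section InteriorOperator.
Hypothesis HL : is_heyting L.
Variable g : bcar B -> bcar B.
Hypothesis hg : forall ps,
  g (clauses ps) = e (hprod L (map (fun p => himp L (fst p) (snd p)) ps)).
Local Notation P := {| iba := B; ig := g |}.

Lemma g_clause p : g (clause p) = e (himp L (fst p) (snd p)).
Proof. rewrite <- clauses1, hg. simpl. rewrite (hmeet1 HL). reflexivity. Qed.

Lemma g_e a : g (e a) = e a.
Proof. rewrite (e_clause a) at 1. rewrite g_clause. simpl. rewrite (himp1x HL). reflexivity. Qed.

Lemma g_top : g (btop B) = btop B.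
Proof. change (btop B) with (clauses []). rewrite hg. apply e_top. Qed.

Lemma g_meet x y : g (x ⊓ y) = g x ⊓ g y.
Proof.
  destruct (clauses_normal_form x) as [ps ->], (clauses_normal_form y) as [qs ->].
  rewrite <- clauses_cat, !hg, map_app, (hprod_cat HL), e_meet. reflexivity.
Qed.

Lemma e_imp_le_clause u v : ble B (e (himp L u v)) (clause (u, v)).
Proof.
  apply (ble_shunt HB). rewrite <- e_meet, (hmeetC HL), (hmeet_imp HL), e_meet. apply (bleIr HB).
Qed.

Lemma g_le x : g x ⊓ x = g x.
Proof.
  destruct (clauses_normal_form x) as [ps ->]. rewrite hg, (lathom_hprod He).
  induction ps as [|[u v] ps IH].
  - apply (bmeet1 HB).
  - apply (bleI2 HB); [apply e_imp_le_clause | exact IH].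
Qed.

Lemma g_idem x : g (g x) = g x.
Proof. destruct (clauses_normal_form x) as [ps ->]. rewrite hg. apply g_e. Qed.

Lemma is_interior_free : is_interior P.
Proof. exact (conj HB (conj g_top (conj g_meet (conj g_le g_idem)))). Qed.

Definition e_open (a : hcar L) : opn P := exist (fun z => g z = z) (e a) (g_e a).

Lemma e_open_hhom : hhom L (Oalg is_interior_free) e_open.
Proof.
  repeat split; intros; apply sig_eq; simpl; rewrite ?e_meet, ?e_join, ?e_bot, ?e_top;
    try reflexivity.
  symmetry. apply (g_clause (x, y)).
Qed.

Lemma e_open_surjective (z : opn P) : exists a, e_open a = z.
Proof.
  destruct z as [z Hz]. destruct (clauses_normal_form z) as [ps Hps].
  exists (hprod L (map (fun p => himp L (fst p) (snd p)) ps)). apply sig_eq; simpl.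
  rewrite <- hg, <- Hps. exact Hz.
Qed.

Lemma in_rho_free E : in_V E L -> in_rho E P.
Proof. intros HVL. exists is_interior_free. exact (in_V_image e_open_hhom e_open_surjective HVL). Qed.

Lemma ig_commute_of_clauses A (HA : is_interior A) (kb : bcar B -> bcar (iba A)) :
  bhom B (iba A) kb -> (forall p, kb (g (clause p)) = ig A (kb (clause p))) ->
  forall x, kb (g x) = ig A (kb x).
Proof.
  intros Hkb Hclause x. destruct (clauses_normal_form x) as [ps ->].
  destruct Hkb as (Hm & _ & _ & _ & Ht). destruct HA as (_ & Htop & Hmeet & _).
  induction ps as [|p ps IH].
  - change (clauses []) with (btop B). rewrite g_top, Ht, Htop. reflexivity.
  - rewrite clauses_cons, g_meet, !Hm, IH, Hclause, Hmeet. reflexivity.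
Qed.

Lemma iahom_extend A (HA : is_interior A) (k : hcar L -> opn A) :
  hhom L (Oalg HA) k ->
  exists kb, iahom P A kb /\ forall a, kb (e a) = proj1_sig (k a).
Proof.
  intros Hk.
  destruct (proj2 (proj2 hfree) (iba A) (proj1 HA) _ (lathom_opens Hk))
    as [kb [[Hkb Hkbe] _]].
  exists kb. split; [split; [exact Hkb|] | exact Hkbe].
  apply (ig_commute_of_clauses HA Hkb). intros [u v].
  destruct Hk as (_ & _ & Hi & _). pose proof Hkb as (_ & Hj & Hc & _).
  rewrite g_clause, Hkbe. simpl. rewrite Hi. unfold clause; simpl.
  rewrite Hj, Hc, !Hkbe. reflexivity.
Qed.
End InteriorOperator.
End FreeBooleanExtension.

Theorem lemma5p3 (E : hterm -> hterm -> Prop) (L : HSig)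
  (hL : projective_in_V E L)
  (B : BSig) (e : hcar L -> bcar B) (hfree : is_free_bool_ext L B e)
  (g : bcar B -> bcar B)
  (hg : forall ps : list (hcar L * hcar L),
        g (bprod B (map (fun p => bjoin B (bcompl B (e (fst p))) (e (snd p))) ps))
        = e (hprod L (map (fun p => himp L (fst p) (snd p)) ps))) :
  projective_in_rho E {| iba := B; ig := g |}.
Proof.
  destruct hL as [HVL Hproj]. pose proof (proj1 HVL) as HL.
  split; [exact (in_rho_free hfree HL g hg HVL)|].
  intros A C [HA HVA] [HC HVC] f Hf Hfsurj h Hh.
  pose (h' := fun a => open_map C h (proj2 Hh) (e_open hfree HL g hg a)).
  assert (Hh' : hhom L (Oalg HC) h')
    by exact (hhom_comp (e_open_hhom hfree HL g hg) (open_map_hhom _ HC Hh)).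
  destruct (Hproj _ _ HVA HVC _ (open_map_hhom HA HC Hf) (open_map_surjective HA Hf Hfsurj)
              h' Hh') as [k [Hk Hfk]].
  destruct (iahom_extend hfree HL g hg Hk) as [kb [Hkb Hkbe]].
  exists kb. split; [exact Hkb|].
  apply (free_bool_ext_unique hfree (proj1 HC) (bhom_comp (proj1 Hkb) (proj1 Hf)) (proj1 Hh)).
  intro a. rewrite Hkbe. exact (f_equal (@proj1_sig _ _) (Hfk a)).
Qed.
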